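(* Let $X=\{x_0,\ldots,x_m\}$, $X'=\{x'_0,\ldots,x'_q\}$, $c\in\mathbb{R}^q\langle\langle X\rangle\rangle$ and $d\in\mathbb{R}^m\langle\langle X'\rangle\rangle$ purely improper. Then the series $c\,\tilde\circ\,\delta_{(d^{\sqcup\!\sqcup -1}\circ c)^{\circ-1}}\in\mathbb{R}^q\langle\langle X\rangle\rangle$ is the unique fixed point of the map $e\mapsto c\,\tilde\circ\,\delta_{(d\circ e)}$ on $\mathbb{R}^q\langle\langle X\rangle\rangle$.
   Context: $\mathbb{R}^\ell\langle\langle X\rangle\rangle$: formal power series in the noncommuting letters of $X$ with coefficients in $\mathbb{R}^\ell$; $c_i$ is the $i$-th component; products of vector-valued series are componentwise. A series is purely improper if every component has nonzero constant term $(c_i,\emptyset)$. Shuffle product $\sqcup\!\sqcup$: bilinear, $(x_i\eta)\sqcup\!\sqcup(x_j\xi)=x_i(\eta\sqcup\!\sqcup x_j\xi)+x_j(x_i\eta\sqcup\!\sqcup\xi)$, $\eta\sqcup\!\sqcup\emptyset=\emptyset\sqcup\!\sqcup\eta=\eta$; $d^{\sqcup\!\sqcup-1}$ is the componentwise shuffle inverse of a purely improper $d$. Composition product: for $c\in\mathbb{R}^k\langle\langle X'\rangle\rangle$, $X'=\{x'_0,\ldots,x'_\ell\}$, and $e\in\mathbb{R}^\ell\langle\langle X\rangle\rangle$, $c\circ e=\sum_{\eta\in X'^\ast}(c,\eta)\psi_e(\eta)(\mathbf 1)$, where $\mathbf 1=1\emptyset$, $\psi_e$ is the homomorphism from words to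 linear endomorphisms of $\mathbb{R}\langle\langle X\rangle\rangle$ with $\psi_e(x'_i)(w)=x_0(e_i\sqcup\!\sqcup w)$, $e_0:=\mathbf 1$. Multiplicative mixed composition for $c\in\mathbb{R}^p\langle\langle X\rangle\rangle$, $g\in\mathbb{R}^m\langle\langle X\rangle\rangle$: $c\,\tilde\circ\,\delta_g=\sum_{\eta\in X^\ast}(c,\eta)\bar\phi_g(\eta)(\mathbf 1)$ with $\bar\phi_g(x_0)(w)=x_0w$, $\bar\phi_g(x_i)(w)=x_i(g_i\sqcup\!\sqcup w)$ ($i\ge1$), extended multiplicatively (concatenation to composition). For purely improper $g\in\mathbb{R}^m\langle\langle X\rangle\rangle$, $g^{\circ-1}$ denotes the unique series $h\in\mathbb{R}^m\langle\langle X\rangle\rangle$ satisfying $h=g^{\sqcup\!\sqcup-1}\,\tilde\circ\,\delta_h$ (equivalently, $\delta_h$ is the inverse of $\delta_g$ in the group of symbols $\delta_g$ with product $\delta_a\circ\delta_b=\delta_{b\sqcup\!\sqcup(a\,\tilde\circ\,\delta_b)}$ and identity $\delta_{\mathbb 1}$, $\mathbb 1=[1\cdots1]^t$). *)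

From HB Require Import structures.
From mathcomp Require Import all_boot all_order all_algebra.
From Stdlib Require Import ClassicalEpsilon.
Set Implicit Arguments. Unset Strict Implicit. Unset Printing Implicit Defensive.
Import Order.TTheory GRing.Theory Num.Theory.
Local Open Scope ring_scope.

Section FPS.
Variable R : realFieldType.

(* Scalar series over the alphabet {x_0,...,x_(n-1)} = 'I_n : coefficient map on words *)
Definition series (n : nat) := seq 'I_n -> R.

Definition vseries (l n : nat) := 'I_l -> series n.

Definition fps_one {n} : series n := fun w => if w is [::] then 1 else 0.

Definition lprep {n} (i : 'I_n) (s : series n) : series n :=
  fun w => if w is a :: w' then (if a == i then s w' else 0) else 0.

(* shuffle of words, as a list of words with multiplicity:
   (a u) sh (b v) = a (u sh b v) + b (a u sh v), u sh [] = [] sh u = u *)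
Fixpoint shw {A : Type} (u : seq A) : seq A -> seq (seq A) :=
  match u with
  | [::] => fun v => [:: v]
  | a :: u' => fix aux (v : seq A) : seq (seq A) :=
      match v with
      | [::] => [:: u]
      | b :: v' => [seq a :: w | w <- shw u' v] ++ [seq b :: w | w <- aux v']
      end
  end.

(* shuffle product of series: bilinear extension of shw.  Only words u, v with
   size u + size v = size w can contribute to the coefficient of w. *)
Definition shuffle {n} (a b : series n) : series n :=
  fun w => \sum_(k < (size w).+1) \sum_(u : k.-tuple 'I_n)
             \sum_(v : (size w - k).-tuple 'I_n)
               a u * b v * (count_mem w (shw (u : seq 'I_n) (v : seq 'I_n)))%:R.

Definition purely_improper {l n} (c : vseries l n) : Prop :=
  forall i, c i [::] != 0.

Definition shinv {l n} (d : vseries l n) : vseries l n :=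
  fun j => epsilon (inhabits (fun _ => 0)) (fun e : series n => shuffle (d j) e = fps_one).

(* e_0 := 1, e_i := e_(i-1)-th component for i >= 1 *)
Definition ext {l n} (e : vseries l n) (i : 'I_l.+1) : series n :=
  if unlift ord0 i is Some j then e j else fps_one.

(* psi_e(eta)(1), letters of eta in X' = 'I_(q.+1), e in R^q<<X>>, X = 'I_(m.+1) *)
Definition psi1 {q m} (e : vseries q m.+1) (eta : seq 'I_q.+1) : series m.+1 :=
  foldr (fun i s => lprep ord0 (shuffle (ext e i) s)) fps_one eta.

(* composition product c o e.  Since psi_e(eta)(1) is supported on words of
   length >= size eta, only eta with size eta <= size w contribute. *)
Definition fps_comp {k q m} (c : vseries k q.+1) (e : vseries q m.+1) : vseries k m.+1 :=
  fun j w => \sum_(l < (size w).+1) \sum_(eta : l.-tuple 'I_q.+1)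
               c j eta * psi1 e eta w.

Definition phibar1 {m} (g : vseries m m.+1) (eta : seq 'I_m.+1) : series m.+1 :=
  foldr (fun i s => match unlift ord0 i with
                    | Some j => lprep i (shuffle (g j) s)
                    | None => lprep i s
                    end) fps_one eta.

Definition mcomp {p m} (c : vseries p m.+1) (g : vseries m m.+1) : vseries p m.+1 :=
  fun j w => \sum_(l < (size w).+1) \sum_(eta : l.-tuple 'I_m.+1)
               c j eta * phibar1 g eta w.

Definition compinv {m} (g : vseries m m.+1) : vseries m m.+1 :=
  epsilon (inhabits (fun _ _ => 0)) (fun h => h = mcomp (shinv g) h).

End FPS.

From mathcomp Require Import all_boot all_order all_algebra.
From Stdlib Require Import ClassicalEpsilon FunctionalExtensionality.
Import GRing.Theory Num.Theory.
Local Open Scope ring_scope.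
Set Implicit Arguments. Unset Strict Implicit. Unset Printing Implicit Defensive.

(* Every product involved is triangular in the length of words: the
   coefficient of a word w in a sh b only involves words of a and b no longer
   than w, and that of w in c o e or in c ~o delta_g only involves words of e
   or g strictly shorter than w.  Hence maps such as e |-> c ~o delta_(d o e)
   are contractions for the word-length ultrametric, so they have at most one
   fixed point, and every equation h = a ~o delta_h has a solution; this is
   how g^(o-1) exists.
   Composition with c is a morphism for the shuffle product, and
   d o (c ~o delta_h) = (d o c) ~o delta_h.  Thus for g = d^(sh-1) o c we get
   g^(sh-1) = d o c, and for h = g^(o-1) and e0 = c ~o delta_h,
     d o e0 = (d o c) ~o delta_h = g^(sh-1) ~o delta_h = h,
   that is, e0 = c ~o delta_(d o e0).
   Both c o e and c ~o delta_g are instances of a single product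
   c |-> sum_eta (c, eta) psi(eta)(1), with psi(x_i)(s) = x_(sigma i)(f_i sh s). *)

Definition eq_below (A V : Type) (n : nat) (a b : seq A -> V) :=
  forall v, (size v < n)%N -> a v = b v.

Lemma eq_below_le (A V : Type) (n n' : nat) (a b : seq A -> V) :
  (n' <= n)%N -> eq_below n a b -> eq_below n' a b.
Proof. by move=> le_n'n ab v lt_v; apply: ab; apply: leq_trans le_n'n. Qed.

Definition contractive (A V I J : Type)
    (F : (I -> seq A -> V) -> (J -> seq A -> V)) :=
  forall h h' N, (forall i, eq_below N (h i) (h' i)) ->
  forall j, eq_below N.+1 (F h j) (F h' j).

Lemma contractive_comp (A V I J K : Type)
    (F : (J -> seq A -> V) -> (K -> seq A -> V))
    (G : (I -> seq A -> V) -> (J -> seq A -> V)) :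
  contractive F -> contractive G -> contractive (F \o G).
Proof.
move=> cF cG h h' N eq_h k.
exact: eq_below_le (leqnSn _) (cF _ _ _ (cG _ _ _ eq_h) k).
Qed.

Section ContractionFixpoint.
Variables (A V J : Type) (F : (J -> seq A -> V) -> (J -> seq A -> V)).
Hypothesis cF : contractive F.

Lemma contractive_fixpoint_unique h h' : F h = h -> F h' = h' -> h = h'.
Proof.
move=> Fh Fh'; suff eq_N N j : eq_below N (h j) (h' j).
  do 2!apply: functional_extensionality => ?; exact: eq_N.
elim: N j => [|N IH] j; first by [].
by rewrite -Fh -Fh'; apply: cF.
Qed.

Lemma contractive_fixpoint_exists (h0 : J -> seq A -> V) : exists h, F h = h.
Proof.
pose hs k := iter k F h0.
have hs_agree N k : (N <= k)%N -> forall j, eq_below N (hs N j) (hs k j).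
  elim: N k => [|N IH] [|k] //= le_Nk j; exact/cF/IH.
exists (fun j v => hs (size v).+1 j v).
do 2!apply: functional_extensionality => ?.
apply: cF (ltnSn _) => j v lt_v; exact: hs_agree lt_v j v (ltnSn _).
Qed.

End ContractionFixpoint.

Lemma big_tuple0 (V : nmodType) (T : finType) (F : 0.-tuple T -> V) :
  \sum_t F t = F [tuple].
Proof. by rewrite (big_pred1 [tuple]) // => t; apply/esym/eqP; exact: tuple0. Qed.

Lemma big_tupleS (V : nmodType) (T : finType) k (F : k.+1.-tuple T -> V) :
  \sum_t F t = \sum_(x : T) \sum_(t : k.-tuple T) F [tuple of x :: t].
Proof.
rewrite pair_big (reindex (fun p : T * k.-tuple T => [tuple of p.1 :: p.2])) //.
exists (fun t => (thead t, [tuple of behead t])) => [[x t] _ | t _] /=.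
  by rewrite theadE; congr pair; apply: val_inj.
by rewrite [RHS]tuple_eta.
Qed.

Lemma count_shw_cons (A : eqType) (i : A) w u v :
  count_mem (i :: w) (shw u v) =
  ((if u is x :: u' then (x == i) * count_mem w (shw u' v) else 0) +
   (if v is y :: v' then (y == i) * count_mem w (shw u v') else 0))%N.
Proof.
have count_cons (x : A) s :
    count_mem (i :: w) [seq x :: t | t <- s] = ((x == i) * count_mem w s)%N.
  rewrite count_map; case: eqP => [-> | ne_xi].
    by rewrite mul1n; apply: eq_count => t; rewrite /= eqseq_cons eqxx.
  rewrite mul0n -(count_pred0 s); apply: eq_count => t.
  by rewrite /= eqseq_cons (introF eqP ne_xi).
case: u => [|x u]; case: v => [|y v] //=; rewrite ?addn0 ?add0n ?eqseq_cons.
- by case: (y == i); rewrite ?mul1n ?mul0n.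
- have -> : shw u [::] = [:: u] by case: u.
  by rewrite /= addn0; case: (x == i); rewrite ?mul1n ?mul0n.
- by rewrite count_cat !count_cons.
Qed.

Section Shuffle.
Variables (R : realFieldType) (n : nat).
Implicit Types (a b c : series R n) (w : seq 'I_n).

Definition der (i : 'I_n) a : series R n := fun w => a (i :: w).

Lemma shuffle_nil a b : shuffle a b [::] = a [::] * b [::].
Proof. by rewrite /shuffle big_ord1 !big_tuple0 /= mulr1. Qed.

Lemma shuffle_cons a b i w :
  shuffle a b (i :: w) = shuffle (der i a) b w + shuffle a (der i b) w.
Proof.
rewrite /shuffle.
under eq_bigr => k _ do under eq_bigr => u _ do under eq_bigr => v _ do
  rewrite count_shw_cons natrD mulrDr.
under eq_bigr => k _ do under eq_bigr => u _ do rewrite big_split.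
under eq_bigr => k _ do rewrite big_split.
rewrite big_split /=; congr (_ + _).
  rewrite big_ord_recl big_tuple0 big1 ?add0r => [|v _]; last by rewrite mulr0.
  apply: eq_bigr => k _; rewrite big_tupleS.
  rewrite (bigD1 i) //= [X in _ + X]big1 ?addr0 => [|x /negbTE ne_xi].
    by apply: eq_bigr => u _; apply: eq_bigr => v _; rewrite eqxx mul1n.
  by apply: big1 => u _; apply: big1 => v _; rewrite ne_xi mul0n mulr0.
rewrite big_ord_recr /= [X in _ + X]big1 ?addr0 => [|u _]; last first.
  apply: big1 => v _; suff -> : tval v = [::] by rewrite mulr0.
  by apply/nilP; rewrite /nilp size_tuple subnn.
apply: eq_bigr => k _; apply: eq_bigr => u _.
rewrite /= subSn; last by rewrite -ltnS.
rewrite big_tupleS (bigD1 i) //= [X in _ + X]big1 ?addr0 => [|x /negbTE ne_xi].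
  by apply: eq_bigr => v _; rewrite eqxx mul1n.
by apply: big1 => v _; rewrite ne_xi mul0n mulr0.
Qed.

Lemma der_shuffle a b i :
  der i (shuffle a b) = fun w => shuffle (der i a) b w + shuffle a (der i b) w.
Proof. by apply: functional_extensionality => w; rewrite /der shuffle_cons. Qed.

Lemma shuffle_local a a' b b' w :
  eq_below (size w).+1 a a' -> eq_below (size w).+1 b b' ->
  shuffle a b w = shuffle a' b' w.
Proof.
elim: w a a' b b' => [|i w IH] a a' b b' eq_a eq_b.
  by rewrite !shuffle_nil eq_a // eq_b.
rewrite !shuffle_cons; congr (_ + _); apply: IH => v lt_v;
  by [apply: eq_a | apply: eq_b | apply: eq_a; apply: ltnW | apply: eq_b; apply: ltnW].
Qed.

Lemma shuffle_local0 a b b' w :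
  a [::] = 0 -> eq_below (size w) b b' -> shuffle a b w = shuffle a b' w.
Proof.
elim: w a b b' => [|i w IH] a b b' a0 eq_b; first by rewrite !shuffle_nil a0 !mul0r.
rewrite !shuffle_cons; congr (_ + _); first exact: shuffle_local.
by apply: IH => // v lt_v; apply: eq_b.
Qed.

Lemma shuffle0r a w : shuffle a (fun _ => 0) w = 0.
Proof.
elim: w a => [|i w IH] a; first by rewrite shuffle_nil mulr0.
by rewrite shuffle_cons !IH addr0.
Qed.

Lemma shuffle_sumr (I : Type) (r : seq I) (P : pred I) (F : I -> series R n) a w :
  shuffle a (fun v => \sum_(x <- r | P x) F x v) w =
  \sum_(x <- r | P x) shuffle a (F x) w.
Proof.
elim: w a F => [|i w IH] a F.
  by rewrite shuffle_nil mulr_sumr; apply: eq_bigr => x _; rewrite shuffle_nil.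
rewrite shuffle_cons IH (IH a (fun x => der i (F x))) -big_split.
by apply: eq_bigr => x _; rewrite shuffle_cons.
Qed.

Lemma shuffle_addr a b b' w :
  shuffle a (fun v => b v + b' v) w = shuffle a b w + shuffle a b' w.
Proof.
elim: w a b b' => [|i w IH] a b b'; first by rewrite !shuffle_nil mulrDr.
by rewrite !shuffle_cons !IH addrACA.
Qed.

Lemma shuffle_scaler r a b w : shuffle a (fun v => r * b v) w = r * shuffle a b w.
Proof.
elim: w a b => [|i w IH] a b; first by rewrite !shuffle_nil mulrCA.
by rewrite !shuffle_cons !IH mulrDr.
Qed.

Lemma shuffleC a b : shuffle a b = shuffle b a.
Proof.
apply: functional_extensionality => w.
elim: w a b => [|i w IH] a b; first by rewrite !shuffle_nil mulrC.
by rewrite !shuffle_cons IH (IH a) addrC.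
Qed.

Lemma shuffle_addl a a' b w :
  shuffle (fun v => a v + a' v) b w = shuffle a b w + shuffle a' b w.
Proof. by rewrite shuffleC shuffle_addr !(shuffleC b). Qed.

Lemma shuffle_suml (I : Type) (r : seq I) (P : pred I) (F : I -> series R n) b w :
  shuffle (fun v => \sum_(x <- r | P x) F x v) b w =
  \sum_(x <- r | P x) shuffle (F x) b w.
Proof.
rewrite shuffleC shuffle_sumr.
by apply: eq_bigr => x _; rewrite shuffleC.
Qed.

Lemma shuffle1l b : shuffle (fps_one R) b = b.
Proof.
apply: functional_extensionality => w.
elim: w b => [|i w IH] b; first by rewrite shuffle_nil mul1r.
rewrite shuffle_cons IH (_ : der i (fps_one R) = fun _ => 0) //.
by rewrite shuffleC shuffle0r add0r.
Qed.

Lemma shuffle1r a : shuffle a (fps_one R) = a.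
Proof. by rewrite shuffleC shuffle1l. Qed.

Lemma shuffleA a b c : shuffle a (shuffle b c) = shuffle (shuffle a b) c.
Proof.
apply: functional_extensionality => w.
elim: w a b c => [|i w IH] a b c; first by rewrite !shuffle_nil mulrA.
rewrite !shuffle_cons !der_shuffle (shuffle_addr a (shuffle (der i b) c)).
by rewrite (shuffle_addl (shuffle (der i a) b)) !IH addrA.
Qed.

Lemma shuffleCA a b c : shuffle a (shuffle b c) = shuffle b (shuffle a c).
Proof. by rewrite !shuffleA (shuffleC a). Qed.

Lemma shuffle_inv_unique a (x y : series R n) :
  shuffle a x = fps_one R -> shuffle a y = fps_one R -> x = y.
Proof.
move=> ax ay.
by rewrite -[x]shuffle1r -ay shuffleA (shuffleC x) ax shuffle1l.
Qed.

Lemma shuffle_inv_exists a : a [::] != 0 -> exists x, shuffle a x = fps_one R.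
Proof.
(* x = (1 - a' sh x) / a(empty) is a contraction since a' has no constant term *)
move=> a0; pose a' v := a v - a [::] * fps_one R v.
pose F (h : unit -> series R n) (_ : unit) w :=
  (fps_one R w - shuffle a' (h tt) w) / a [::].
have cF : contractive F.
  move=> h h' N eq_h [] w lt_w; rewrite /F (shuffle_local0 (b' := h' tt)) //.
    by rewrite /a' mulr1 subrr.
  by move=> v lt_v; apply: eq_h (leq_trans lt_v (ltnSE lt_w)).
have [h Fh] := contractive_fixpoint_exists cF (fun _ _ => 0).
exists (h tt); apply: functional_extensionality => w.
have -> : a = fun v => a' v + a [::] * fps_one R v.
  by apply: functional_extensionality => v; rewrite subrK.
rewrite shuffle_addl (shuffleC (fun v => _ * _)) shuffle_scaler shuffle1r.
by rewrite -{2}Fh /F mulrC divfK // addrC subrK.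
Qed.

End Shuffle.

Section Act.
Variables (R : realFieldType) (p n : nat).
Variables (sigma : 'I_p -> 'I_n) (f : 'I_p -> series R n).
Implicit Types (a b c : series R p) (w : seq 'I_n).

(* With [sigma] constantly [ord0] and [f = ext e], [act] is [fps_comp];
   with [sigma = id] and [f = ext g], it is [mcomp]. *)
Definition psi (eta : seq 'I_p) : series R n :=
  foldr (fun x s => lprep (sigma x) (shuffle (f x) s)) (fps_one R) eta.

Definition act c : series R n :=
  fun w => \sum_(l < (size w).+1) \sum_(eta : l.-tuple 'I_p) c eta * psi eta w.

Lemma psi_graded eta w : (size w < size eta)%N -> psi eta w = 0.
Proof.
elim: eta w => [|x eta IH] [|k w] //= lt_w_eta; rewrite /lprep; case: eqP => // _.
rewrite (@shuffle_local _ _ _ (f x) _ (fun _ => 0)) ?shuffle0r // => v lt_v.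
exact/IH/(leq_trans lt_v lt_w_eta).
Qed.

Lemma act_trunc c w N : (size w <= N)%N ->
  act c w = \sum_(l < N.+1) \sum_(eta : l.-tuple 'I_p) c eta * psi eta w.
Proof.
move=> le_wN; rewrite /act (big_ord_widen N.+1 (fun l => \sum_(eta : l.-tuple 'I_p)
  c eta * psi eta w)) // big_mkcond; apply: eq_bigr => l _.
case: ltnP => // le_wl; symmetry; apply: big1 => eta _.
by rewrite psi_graded ?mulr0 // size_tuple.
Qed.

Lemma act_nil c : act c [::] = c [::].
Proof. by rewrite /act big_ord1 big_tuple0 /= mulr1. Qed.

Lemma act_cons c k w :
  act c (k :: w) = \sum_(x | sigma x == k) shuffle (f x) (act (der x c)) w.
Proof.
rewrite /act big_ord_recl big_tuple0 /= mulr0 add0r.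
under eq_bigr => l _ do rewrite big_tupleS.
rewrite exchange_big [RHS]big_mkcond; apply: eq_bigr => x _.
under eq_bigr => l _ do under eq_bigr => t _ do rewrite /=.
rewrite eq_sym; case: eqP => _; last by do 2!(apply: big1 => ? _); rewrite mulr0.
rewrite (@shuffle_local _ _ _ (f x) _ (fun v => \sum_(l < (size w).+1)
  \sum_(eta : l.-tuple 'I_p) der x c eta * psi eta v)) // => [|v]; last exact: act_trunc.
rewrite shuffle_sumr; apply: eq_bigr => l _; rewrite shuffle_sumr.
by apply: eq_bigr => eta _; rewrite shuffle_scaler.
Qed.

Lemma der_act c k :
  der k (act c) = fun w => \sum_(x | sigma x == k) shuffle (f x) (act (der x c)) w.
Proof. by apply: functional_extensionality => w; rewrite /der act_cons. Qed.

Lemma act_one : act (fps_one R) = fps_one R.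
Proof.
apply: functional_extensionality => w.
rewrite /act big_ord_recl big_tuple0 /= mul1r big1 ?addr0 // => l _.
by apply: big1 => eta _; rewrite (tuple_eta eta) mul0r.
Qed.

Lemma act0 : act (fun _ => 0) = fun _ => 0.
Proof.
apply: functional_extensionality => w.
by apply: big1 => l _; apply: big1 => eta _; rewrite mul0r.
Qed.

Lemma act_add a b w : act (fun v => a v + b v) w = act a w + act b w.
Proof.
rewrite /act -big_split; apply: eq_bigr => l _.
by rewrite -big_split; apply: eq_bigr => eta _; rewrite mulrDl.
Qed.

Lemma act_sum (I : Type) (r : seq I) (F : I -> series R p) w :
  act (fun v => \sum_(x <- r) F x v) w = \sum_(x <- r) act (F x) w.
Proof.
rewrite /act; under eq_bigr => l _ do under eq_bigr => eta _ do rewrite mulr_suml.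
by under eq_bigr => l _ do rewrite exchange_big; rewrite exchange_big.
Qed.

Lemma act_shuffle a b : act (shuffle a b) = shuffle (act a) (act b).
Proof.
apply: functional_extensionality => w; have [N] := ubnP (size w).
elim: N w a b => // N IH [|k w] a b lt_wN; first by rewrite act_nil !shuffle_nil !act_nil.
rewrite act_cons shuffle_cons !der_act shuffle_suml shuffle_sumr -big_split /=.
apply: eq_bigr => x _; rewrite -shuffleA (shuffleCA (act a)) -shuffle_addr.
apply: shuffle_local => // v lt_v.
by rewrite der_shuffle act_add !IH // (leq_trans lt_v lt_wN).
Qed.

End Act.

Lemma act_local (R : realFieldType) (p n : nat) (sigma : 'I_p -> 'I_n)
    (f f' : 'I_p -> series R n) (c : series R p) (N : nat) :
  (forall x, eq_below N (f x) (f' x)) ->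
  eq_below N.+1 (act sigma f c) (act sigma f' c).
Proof.
elim: N c => [|N IH] c eq_f [|k w] //=; rewrite ?act_nil // ltnS ?ltn0 // => lt_w.
rewrite !act_cons; apply: eq_bigr => x _.
apply: shuffle_local => v /leq_trans/(_ lt_w) lt_v; first exact: eq_f.
by apply: IH lt_v => y; apply: eq_below_le (eq_f y).
Qed.

Lemma actA (R : realFieldType) (p n : nat) (F : 'I_p -> series R n.+1)
    (f : 'I_n.+1 -> series R n.+1) (d : series R p) :
  f ord0 = fps_one R ->
  act (fun _ => ord0) (fun x => act id f (F x)) d =
  act id f (act (fun _ => ord0) F d).
Proof.
move=> f0; apply: functional_extensionality => w; have [N] := ubnP (size w).
elim: N w d => // N IH [|k w] d lt_wN; first by rewrite !act_nil.
rewrite !act_cons (big_pred1 k) //=.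
case: (eqVneq k ord0) => [-> | nz_k]; last first.
  have -> : der k (act (fun _ => ord0) F d) = fun _ => 0.
    apply: functional_extensionality => v; rewrite /der act_cons big_pred0 // => x.
    by apply/negbTE; rewrite eq_sym.
  by rewrite big_pred0_eq act0 shuffle0r.
rewrite der_act f0 shuffle1l act_sum; apply: eq_bigr => x _; rewrite act_shuffle.
by apply: shuffle_local => // v lt_v; apply/IH/(leq_trans lt_v).
Qed.

Section SeriesProducts.
Variable R : realFieldType.

Lemma fps_compE k q m (c : vseries R k q.+1) (e : vseries R q m.+1) j :
  fps_comp c e j = act (fun _ => ord0) (ext e) (c j).
Proof. by []. Qed.

Lemma phibar1E m (g : vseries R m m.+1) : phibar1 g = psi id (ext g).
Proof.
apply: functional_extensionality => eta; elim: eta => [|x eta IH] //=.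
by rewrite IH /ext; case: unlift => //; rewrite shuffle1l.
Qed.

Lemma mcompE p m (c : vseries R p m.+1) (g : vseries R m m.+1) j :
  mcomp c g j = act id (ext g) (c j).
Proof. by rewrite /mcomp phibar1E. Qed.

Lemma ext_eq_below l n N (e e' : vseries R l n) :
  (forall j, eq_below N (e j) (e' j)) -> forall i, eq_below N (ext e i) (ext e' i).
Proof. by move=> eq_e i; rewrite /ext; case: unlift. Qed.

Lemma fps_comp_contractive k q m (d : vseries R k q.+1) :
  contractive (fps_comp d : vseries R q m.+1 -> vseries R k m.+1).
Proof. by move=> e e' N eq_e j; apply/act_local/ext_eq_below. Qed.

Lemma mcomp_contractive p m (c : vseries R p m.+1) : contractive (mcomp c).
Proof. by move=> g g' N eq_g j; rewrite !mcompE; apply/act_local/ext_eq_below. Qed.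

Lemma fps_comp_mcomp k q m (d : vseries R k q.+1) (c : vseries R q m.+1)
    (h : vseries R m m.+1) :
  fps_comp d (mcomp c h) = mcomp (fps_comp d c) h.
Proof.
apply: functional_extensionality => j; rewrite mcompE !fps_compE -actA; last first.
  by rewrite /ext unlift_none.
congr act; apply: functional_extensionality => i; rewrite /ext.
by case: unlift => [j'|]; rewrite ?mcompE ?act_one.
Qed.

Lemma shinvP l n (d : vseries R l n) j x :
  shuffle (d j) x = fps_one R -> shinv d j = x.
Proof.
move=> dx; apply: (shuffle_inv_unique _ dx).
by apply: (epsilon_spec _ (fun y => shuffle (d j) y = fps_one R)); exists x.
Qed.

Lemma shinv_shuffle l n (d : vseries R l n) j :
  purely_improper d -> shuffle (d j) (shinv d j) = fps_one R.
Proof. by move=> hd; have [x dx] := shuffle_inv_exists (hd j); rewrite (shinvP dx). Qed.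

Lemma shinv_fps_comp k q m (a b : vseries R k q.+1) (c : vseries R q m.+1) :
  (forall j, shuffle (a j) (b j) = fps_one R) -> shinv (fps_comp a c) = fps_comp b c.
Proof.
move=> ab; apply: functional_extensionality => j; apply: shinvP.
by rewrite !fps_compE -act_shuffle ab act_one.
Qed.

Lemma compinvE m (g : vseries R m m.+1) : compinv g = mcomp (shinv g) (compinv g).
Proof.
apply: (epsilon_spec _ (fun h => h = mcomp (shinv g) h)).
have [h Fh] := contractive_fixpoint_exists (mcomp_contractive (shinv g)) (fun _ _ => 0).
by exists h.
Qed.

End SeriesProducts.

Unset Implicit Arguments. Set Strict Implicit.

Theorem theorem14 (R : realFieldType) (m q : nat)
  (c : vseries R q m.+1) (d : vseries R m q.+1)
  (hc : purely_improper c) (hd : purely_improper d) :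
  let e0 := mcomp c (compinv (fps_comp (shinv d) c)) in
  mcomp c (fps_comp d e0) = e0 /\
  (forall e : vseries R q m.+1, mcomp c (fps_comp d e) = e -> e = e0).
Proof.
move=> e0; set g := fps_comp (shinv d) c.
have shinv_g : shinv g = fps_comp d c.
  by apply: shinv_fps_comp => j; rewrite shuffleC shinv_shuffle.
have d_e0 : fps_comp d e0 = compinv g.
  by rewrite fps_comp_mcomp -shinv_g -compinvE.
split=> [|e fix_e]; first by rewrite d_e0.
apply: (contractive_fixpoint_unique
  (contractive_comp (mcomp_contractive c) (fps_comp_contractive d)) fix_e).
by rewrite /= d_e0.
Qed.
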